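(* Let $n = 8k+5$ with $k\ge 0$ an integer, and let $m \ge 4n-4$. Let $a,b$ be integers of different parity with $1\le a$, $a+2 < b$, and $b+2 \le m$. Then the permutation $(a,a+2)(b,b+2)\in S_m$ is a product of $n$-crossing permutations over $S_m$.
   Context: For integers $2\le n\le m$ and $1 \le j \le m-n+1$, the $n$-crossing permutation $\pi_j\in S_m$ is $\pi_j=(j,\,j+n-1)(j+1,\,j+n-2)\cdots$, i.e. the involution sending $i \mapsto 2j+n-1-i$ for $j\le i\le j+n-1$ and fixing all other elements of $\{1,\dots,m\}$. The $n$-crossing permutations over $S_m$ are $\pi_1,\dots,\pi_{m-n+1}$. (The permutations $(a,a+2)(b,b+2)$ in the claim are exactly the products of one even-string and one odd-string transposition $(i,i+2)$ that correspond to a pair of triple crossings on disjoint triples of consecutive strings.) *)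

(* Points of {1,...,m} are represented by 'I_m via i <-> i.+1. *)
From mathcomp Require Import all_boot all_fingroup.
Set Implicit Arguments. Unset Strict Implicit. Unset Printing Implicit Defensive.

Local Open Scope group_scope.

Definition crossing_nat (n j i : nat) : nat :=
  if (j <= i) && (i <= j + n - 1) then 2 * j + n - 1 - i else i.

Definition acts_as (m : nat) (s : 'S_m) (f : nat -> nat) : Prop :=
  forall i : 'I_m, (s i).+1 = f i.+1.

Definition is_crossing (n m : nat) (s : 'S_m) : Prop :=
  exists j : nat, [/\ 1 <= j, j <= m - n + 1 & acts_as s (crossing_nat n j)].

Definition crossing_product (n m : nat) (s : 'S_m) : Prop :=
  exists ps : seq 'S_m, (forall p, p \in ps -> is_crossing n p) /\
                        \prod_(p <- ps) p = s.

Definition swap_nat (x y i : nat) : nat :=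
  if i == x then y else if i == y then x else i.

From mathcomp Require Import all_boot all_fingroup zify.
Set Implicit Arguments. Unset Strict Implicit. Unset Printing Implicit Defensive.
Local Open Scope group_scope.

(* Let H be the group generated by the crossings of n = 2h + 1 strings, h = 4k + 2.  Four
   crossings at consecutive positions multiply to a 3-cycle (x, x+2h+2, x+2h), and commutators
   of such 3-cycles produce (c, c+4, c+2) = (c, c+2)(c+2, c+4).  Chaining these, H contains
   every product of two transpositions (x, x+2), (y, y+2) with x = y mod 2, and then, by
   conjugation, every product of two transpositions that both act on even points or both act
   on odd points.  A crossing is a product of h disjoint transpositions, 2k + 1 on each parity
   class, and transpositions from different classes commute; so multiplying it by
   (J, J+2)(J+1, J+3) leaves an even number in each class, whence (J, J+2)(J+1, J+3) is in H.
   Combining it with same-parity pairs gives (a, a+2)(b, b+2) for a, b of different parity. *)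

Section InvolutionProducts.

Variables (gT : finGroupType) (H : {group gT}).

Lemma mulg_invol_sym (u v : gT) :
  u^-1 = u -> v^-1 = v -> u * v \in H -> v * u \in H.
Proof. by move=> uV vV uvH; rewrite -uV -vV -invMg groupV. Qed.

Lemma mulg_invol_trans (u v w : gT) :
  v^-1 = v -> u * v \in H -> v * w \in H -> u * w \in H.
Proof.
move=> vV uvH vwH; have -> : u * w = (u * v) * (v^-1 * w) by rewrite mulgA mulgK.
by rewrite vV groupM.
Qed.

Lemma mulg_invol_conj (u v w : gT) :
  u^-1 = u -> u * v \in H -> w * v \in H -> w * u * w * v \in H.
Proof.
move=> uV uvH wvH; have -> : w * u * w * v = (w * v) * (u * v)^-1 * (w * v).
  by rewrite invMg uV !mulgA mulgK.
by rewrite groupM // groupM ?groupV.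
Qed.

Variables (I : eqType) (F : I -> gT).

Lemma prod_pairs_in (S : pred I) s :
  {in S &, forall i j, F i * F j \in H} -> all S s -> ~~ odd (size s) ->
  \prod_(i <- s) F i \in H.
Proof.
move=> SH; have [n] := ubnP (size s); elim: n s => // n IH [|i [|j s]] //= lt_s.
  by rewrite big_nil group1.
move=> /and3P[Si Sj Ss]; rewrite negbK => even_s.
by rewrite !big_cons mulgA groupM ?SH ?IH // ltnW.
Qed.

Lemma prod_split_commute (P : pred I) s :
  {in s &, forall i j, P i -> ~~ P j -> commute (F i) (F j)} ->
  \prod_(i <- s) F i = \prod_(i <- s | P i) F i * \prod_(i <- s | ~~ P i) F i.
Proof.
elim: s => [|i s IH] comm; first by rewrite !big_nil mulg1.
have comm_s : {in s &, forall i j, P i -> ~~ P j -> commute (F i) (F j)}.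
  by move=> x y xs ys; apply: comm; rewrite inE ?xs ?ys orbT.
rewrite !big_cons IH //; case: ifP => Pi /=; first by rewrite mulgA.
rewrite !mulgA; congr (_ * _); rewrite big_seq_cond; apply: commute_prod.
by move=> j /andP[js Pj]; apply/commute_sym/comm; rewrite ?inE ?eqxx ?js ?orbT ?Pi.
Qed.

Lemma prod_two_classes_in (A B : pred I) s :
  {in A &, forall i j, F i * F j \in H} -> {in B &, forall i j, F i * F j \in H} ->
  {in A & B, forall i j, commute (F i) (F j)} ->
  all (predU A B) s -> ~~ odd (count A s) -> ~~ odd (count (predC A) s) ->
  \prod_(i <- s) F i \in H.
Proof.
move=> AH BH AB sAB evenA evenB.
have notA_B i : i \in s -> ~~ A i -> B i.
  by move=> si nAi; move/allP/(_ i si): sAB => /orP[Ai|//]; rewrite Ai in nAi.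
rewrite (@prod_split_commute A) => [|i j si sj Ai nAj]; last by apply: AB => //; apply: notA_B.
rewrite -[X in X * _]big_filter -[X in _ * X]big_filter; apply: groupM.
- apply: prod_pairs_in AH _ _; last by rewrite size_filter.
  by rewrite all_filter; apply/allP => i _; apply/implyP.
- apply: prod_pairs_in BH _ _; last by rewrite size_filter.
  by apply/allP => i; rewrite mem_filter => /andP[nAi si]; apply: notA_B.
Qed.

End InvolutionProducts.

(* Points are 0-indexed: 'I_m.+1 stands for {1, ..., m+1}, and [reversal J h] is the
   crossing pi_(J+1) of 2h + 1 strings.  [tp x y] is junk unless x, y <= m, whence the
   range hypotheses. *)
Section Transpositions.

Context {m : nat}.

Definition tp (x y : nat) : 'S_m.+1 := tperm (inord x) (inord y).

Variant tp_spec (x y : nat) (i : 'I_m.+1) : 'I_m.+1 -> Prop :=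
  | TpLeft (j : 'I_m.+1) of i = x :> nat & j = y :> nat : tp_spec x y i j
  | TpRight (j : 'I_m.+1) of i = y :> nat & i <> x :> nat & j = x :> nat :
      tp_spec x y i j
  | TpFixed (j : 'I_m.+1) of i <> x :> nat & i <> y :> nat & j = i :> nat :
      tp_spec x y i j.

Lemma tpP x y i : x <= m -> y <= m -> tp_spec x y i (tp x y i).
Proof.
move=> xm ym; rewrite /tp; case: tpermP => [->|->|nx ny].
- by apply: TpLeft; rewrite /= inordK.
- have [<-|nxy] := eqVneq x y; first by apply: TpLeft; rewrite /= inordK.
  by apply: TpRight; rewrite /= inordK //; apply/eqP; rewrite eq_sym.
- by apply: TpFixed => // e; [apply: nx | apply: ny]; apply/val_inj; rewrite /= inordK // -e.
Qed.

Lemma tpV x y : (tp x y)^-1 = tp x y.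
Proof. exact: tpermV. Qed.

Definition tpair (e : nat * nat) := tp e.1 e.2.

Definition reversal_pairs (J h : nat) : seq (nat * nat) :=
  [seq (J + i, J + 2 * h - i) | i <- iota 0 h].

Definition reversal (J h : nat) : 'S_m.+1 := \prod_(e <- reversal_pairs J h) tpair e.

Lemma reversalS J h : reversal J h.+1 = tp J (J + 2 * h.+1) * reversal J.+1 h.
Proof.
rewrite /reversal.
have -> : reversal_pairs J h.+1 = (J, J + 2 * h.+1) :: reversal_pairs J.+1 h.
  rewrite /reversal_pairs /= addn0 subn0 (iotaDl 1 0) -map_comp; congr cons.
  by apply: eq_map => i /=; congr pair; lia.
by rewrite big_cons.
Qed.

Ltac case_if := match goal with |- context [if ?c then _ else _] =>
  lazymatch c with context [if _ then _ else _] => fail | _ => case: (boolP c) => ? /= end end.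

Lemma reversalE J h i : J + 2 * h <= m ->
  reversal J h i = (if J <= i <= J + 2 * h then 2 * J + 2 * h - i else i) :> nat.
Proof.
elim: h J i => [|h IH] J i Jhm.
  by rewrite /reversal big_nil perm1; do ?case_if; lia.
rewrite reversalS permM IH; last by lia.
by case: tpP; try lia; move=> j *; do ?case_if; lia.
Qed.

Variant reversal_spec (J h : nat) (i : 'I_m.+1) : 'I_m.+1 -> Prop :=
  | ReversalIn (j : 'I_m.+1) of J <= i <= J + 2 * h & j = 2 * J + 2 * h - i :> nat :
      reversal_spec J h i j
  | ReversalOut (j : 'I_m.+1) of ~~ (J <= i <= J + 2 * h) & j = i :> nat :
      reversal_spec J h i j.

Lemma reversalP J h i : J + 2 * h <= m -> reversal_spec J h i (reversal J h i).
Proof.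
move=> Jhm; have := reversalE i Jhm; case: ifP => inJ e.
  exact: ReversalIn.
by apply: ReversalOut; rewrite ?inJ.
Qed.

Ltac case_point solve := match goal with |- context [?F ?i] => is_var i;
  lazymatch F with
  | context [tp ?x ?y] => case: (@tpP x y i ltac:(solve) ltac:(solve)) => *
  | context [reversal ?J ?h] => case: (@reversalP J h i ltac:(solve)) => *
  end end.

Ltac perm_by_cases solve := apply/permP => i; apply/val_inj => /=;
  rewrite ?permM ?perm1; have := ltn_ord i; move=> ?;
  repeat (case_point solve; try (exfalso; solve)); solve.

Ltac distinct_points := first [assumption | congruence].

Lemma tp_commute x y z w : x <= m -> y <= m -> z <= m -> w <= m ->
  x <> z -> x <> w -> y <> z -> y <> w -> commute (tp x y) (tp z w).
Proof. by move=> *; rewrite /commute; perm_by_cases ltac:(distinct_points). Qed.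

Definition cycle3 (a b c : nat) := tp a b * tp a c.

Lemma cycle3_rot a b c : a <= m -> b <= m -> c <= m -> a <> b -> b <> c -> a <> c ->
  cycle3 a b c = cycle3 b c a.
Proof. by move=> *; rewrite /cycle3; perm_by_cases ltac:(distinct_points). Qed.

Lemma cycle3V a b c : a <= m -> b <= m -> c <= m -> a <> b -> b <> c -> a <> c ->
  (cycle3 a b c)^-1 = cycle3 a c b.
Proof. by move=> *; rewrite /cycle3 invMg !tpV; perm_by_cases ltac:(distinct_points). Qed.

Lemma cycle3_commutator a b c d e :
    a <= m -> b <= m -> c <= m -> d <= m -> e <= m ->
    a <> b -> a <> c -> a <> d -> a <> e -> b <> c -> b <> d -> b <> e ->
    c <> d -> c <> e -> d <> e ->
  [~ cycle3 c d e, cycle3 a b c] = cycle3 a d c.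
Proof.
move=> *; rewrite /commg /conjg /cycle3 !invMg !tpV.
by perm_by_cases ltac:(distinct_points).
Qed.

Definition swap2 (x : nat) := tp x (x + 2).

Lemma swap2_mul_swap2 c : c + 4 <= m -> swap2 c * swap2 (c + 2) = cycle3 c (c + 4) (c + 2).
Proof. by move=> *; rewrite /swap2 /cycle3; perm_by_cases ltac:(lia). Qed.

Lemma tp_conj_swap2 x y : x <= m -> y + 2 <= m -> x <> y -> x <> y + 2 ->
  tp x (y + 2) = swap2 y * tp x y * swap2 y.
Proof. by move=> *; rewrite /swap2; perm_by_cases ltac:(lia). Qed.

Lemma reversal_cycle3 h x : 2 <= h -> x + 2 * h + 2 <= m ->
  reversal x h * reversal x.+1 h * reversal x.+2 h * reversal x.+1 h =
  cycle3 x (x + 2 * h + 2) (x + 2 * h).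
Proof. by move=> *; rewrite /cycle3; perm_by_cases ltac:(lia). Qed.

Lemma reversal_is_crossing J h : J + 2 * h <= m -> is_crossing (2 * h + 1) (reversal J h).
Proof.
move=> Jhm; exists J.+1; split => [||i]; try lia.
by rewrite reversalE // /crossing_nat; do ?case_if; lia.
Qed.

Lemma acts_as_swap_pair a b (s : 'S_m.+1) : 1 <= a -> a + 2 < b -> b + 2 <= m.+1 ->
  acts_as s (fun i => swap_nat a (a + 2) (swap_nat b (b + 2) i)) ->
  s = swap2 a.-1 * swap2 b.-1.
Proof.
move=> a1 ab bm act_s; apply/permP => i; apply/val_inj => /=; rewrite permM /swap2.
have := ltn_ord i; move=> ?; repeat (case_point ltac:(lia); try (exfalso; lia)).
all: by move: (act_s i); rewrite /swap_nat; do ?case_if; lia.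
Qed.

End Transpositions.

Section CrossingGroup.

Variables (m h : nat).

Definition reversals : {set 'S_m.+1} :=
  [set reversal J h | J : 'I_m.+1 & J + 2 * h <= m].

Lemma reversal_in J : J + 2 * h <= m -> reversal J h \in <<reversals>>.
Proof.
move=> Jhm; apply: mem_gen; apply/imsetP; exists (inord J); last by rewrite inordK //; lia.
by rewrite inE inordK //; lia.
Qed.

Lemma crossing_product_of_mem g : g \in <<reversals>> -> crossing_product (2 * h + 1) g.
Proof.
move/gen_prodgP => [n [c c_rev ->]].
exists [seq c i | i <- index_enum 'I_n]; split; last by rewrite big_map.
move=> p /mapP[i _ ->]; have /imsetP[J + ->] := c_rev i.
by rewrite inE; apply: reversal_is_crossing.
Qed.

Hypotheses (h_ge2 : 2 <= h) (m_large : 4 * h + 6 <= m).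

Lemma cycle3_commutator_in a b c d e :
    a <= m -> b <= m -> c <= m -> d <= m -> e <= m ->
    a <> b -> a <> c -> a <> d -> a <> e -> b <> c -> b <> d -> b <> e ->
    c <> d -> c <> e -> d <> e ->
  cycle3 a b c \in <<reversals>> -> cycle3 c d e \in <<reversals>> ->
  cycle3 a d c \in <<reversals>>.
Proof.
by move=> *; rewrite -(@cycle3_commutator _ a b c d e) // groupR.
Qed.

Lemma cycle3_wide_in p q r : q = p + 2 * h + 2 -> r = p + 2 * h -> q <= m ->
  cycle3 p q r \in <<reversals>>.
Proof. by move=> -> -> qm; rewrite -reversal_cycle3 // !groupM ?reversal_in //; lia. Qed.

Lemma cycle3_step_in p q r : q = p + 2 -> r = p + 2 * h + 2 -> r + 2 <= m ->
  cycle3 p q r \in <<reversals>>.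
Proof.
move=> -> -> rm; apply: (@cycle3_commutator_in _ (p + 2 * h) _ _ (p + 2 * h + 4)); try lia.
  by rewrite -cycle3V ?groupV; [apply: cycle3_wide_in|..]; lia.
by rewrite cycle3_rot; [apply: cycle3_wide_in|..]; lia.
Qed.

Lemma cycle3_short_in c : c + 4 <= m -> cycle3 c (c + 4) (c + 2) \in <<reversals>>.
Proof.
move=> cm; have [hc|ch] := leqP (2 * h) c.
  apply: (@cycle3_commutator_in _ (c - 2 * h) _ _ (c - 2 * h + 2)); try lia.
    by rewrite cycle3_rot; [apply: cycle3_wide_in|..]; lia.
  rewrite -cycle3_rot; [|lia..].
  by rewrite -cycle3V ?groupV; [apply: cycle3_wide_in|..]; lia.
apply: (@cycle3_commutator_in _ (c + 2 * h + 2) _ _ (c + 2 * h + 4)); try lia.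
  by rewrite -cycle3V ?groupV; [apply: cycle3_step_in|..]; lia.
by apply: cycle3_step_in; lia.
Qed.

Lemma swap2_pair_in x y : odd x = odd y -> x + 2 <= m -> y + 2 <= m ->
  swap2 x * swap2 y \in <<reversals>>.
Proof.
wlog xy : x y / x <= y => [W|pxy xm].
  case: (leqP x y) => [|/ltnW] xy pxy xm ym; first exact: W.
  by apply: mulg_invol_sym; [exact: tpV | exact: tpV | apply: W].
have [t ->] : exists t, y = x + 2 * t by exists ((y - x) %/ 2); lia.
elim: t => [|t IH] tm; first by rewrite addn0 /swap2 /tp tperm2 group1.
apply: (@mulg_invol_trans _ _ _ (swap2 (x + 2 * t))); first exact: tpV.
  by apply: IH; lia.
have -> : x + 2 * t.+1 = x + 2 * t + 2 by lia.
by rewrite swap2_mul_swap2 ?cycle3_short_in //; lia.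
Qed.

Lemma tp_swap2_in x y z : x < y -> odd x = odd y -> odd z = odd x -> y <= m -> z + 2 <= m ->
  tp x y * swap2 z \in <<reversals>>.
Proof.
move=> xy pxy pzx + zm.
have [t ->] : exists t, y = x + 2 * t + 2 by exists ((y - x) %/ 2 - 1); lia.
elim: t => [|t IH] tm; first by rewrite muln0 addn0; apply: swap2_pair_in; lia.
have -> : x + 2 * t.+1 + 2 = x + 2 * t + 2 + 2 by lia.
rewrite tp_conj_swap2; try lia.
apply: mulg_invol_conj; first exact: tpV.
  by apply: IH; lia.
by apply: swap2_pair_in; lia.
Qed.

Lemma tp_pair_in x y z w : x < y -> z < w -> odd x = odd y -> odd z = odd x -> odd w = odd x ->
  y <= m -> w <= m -> tp x y * tp z w \in <<reversals>>.
Proof.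
move=> *; apply: (@mulg_invol_trans _ _ _ (swap2 x)); first exact: tpV.
  by apply: tp_swap2_in; lia.
by apply: mulg_invol_sym; [exact: tpV | exact: tpV | apply: tp_swap2_in; lia].
Qed.

Definition parity_pair (p : bool) : pred (nat * nat) :=
  fun e => [&& e.1 < e.2, e.2 <= m, odd e.1 == p & odd e.2 == p].

Lemma parity_pair_mul_in p :
  {in parity_pair p &, forall e f, tpair e * tpair f \in <<reversals>>}.
Proof.
by move=> [x y] [z w]; rewrite !unfold_in /parity_pair /= => *; apply: tp_pair_in => /=; lia.
Qed.

Lemma parity_pairs_commute :
  {in parity_pair false & parity_pair true, forall e f, commute (tpair e : 'S_m.+1) (tpair f)}.
Proof.
by move=> [x y] [z w]; rewrite !unfold_in /parity_pair /= => *; apply: tp_commute => /=; lia.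
Qed.

Lemma count_reversal_pairs p J n : J + 4 * n <= m ->
  count (parity_pair p) (reversal_pairs J (2 * n)) = n.
Proof.
move=> Jnm; rewrite count_map.
transitivity (count (fun i => odd (J + i) == p) (iota 0 (2 * n))).
  by apply: eq_in_count => i; rewrite mem_iota /preim /parity_pair /= => ?; case: p; lia.
elim: n {Jnm} => [//|n IH].
have -> : (2 * n.+1 = 2 * n + 2)%N by lia.
by rewrite iotaD count_cat IH /=; case: (p); lia.
Qed.

(* h = 4k + 2 is exactly what makes both parity counts of [s] even. *)
Lemma swap2_adjacent_in J : h %% 4 = 2 -> J + 2 * h <= m ->
  swap2 J * swap2 J.+1 \in <<reversals>>.
Proof.
move=> h42 Jhm.
pose s := reversal_pairs J h ++ [:: (J, J + 2); (J.+1, J.+1 + 2)].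
have prod_s : \prod_(e <- s) (tpair e : 'S_m.+1) = reversal J h * (swap2 J * swap2 J.+1).
  by rewrite /s big_cat /= !big_cons big_nil mulg1.
have countA : count (parity_pair false) s = (h %/ 2).+1.
  rewrite /s count_cat {1}(_ : h = 2 * (h %/ 2))%N; last by lia.
  by rewrite count_reversal_pairs /= /parity_pair /=; lia.
rewrite -(groupMl _ (reversal_in Jhm)) -prod_s.
apply: (prod_two_classes_in (@parity_pair_mul_in false) (@parity_pair_mul_in true)).
- exact: parity_pairs_commute.
- rewrite /s all_cat /= /parity_pair /= andbT; apply/andP; split; last by lia.
  by rewrite all_map; apply/allP => i; rewrite mem_iota /preim /= /parity_pair /=; lia.
- by rewrite countA; lia.
- have := count_predC (parity_pair false) s.
  by rewrite countA /s size_cat size_map size_iota /=; lia.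
Qed.

Lemma swap2_mixed_in x y : h %% 4 = 2 -> odd x != odd y -> x + 2 <= m -> y + 2 <= m ->
  swap2 x * swap2 y \in <<reversals>>.
Proof.
move=> h42 pxy xm ym; pose J : nat := odd x.
apply: (@mulg_invol_trans _ _ _ (swap2 J)); first exact: tpV.
  by apply: swap2_pair_in; rewrite /J; lia.
apply: (@mulg_invol_trans _ _ _ (swap2 J.+1)); first exact: tpV.
  by apply: swap2_adjacent_in; rewrite /J; lia.
by apply: swap2_pair_in; rewrite /J; lia.
Qed.

End CrossingGroup.

Theorem lemma4p6 (k m a b : nat) (s : 'S_m) :
  4 * (8 * k + 5) - 4 <= m ->
  odd a != odd b ->
  1 <= a -> a + 2 < b -> b + 2 <= m ->
  acts_as s (fun i => swap_nat a (a + 2) (swap_nat b (b + 2) i)) ->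
  crossing_product (8 * k + 5) s.
Proof.
case: m s => [|m] s m_large pab a1 ab bm act_s; first by lia.
have -> : 8 * k + 5 = 2 * (4 * k + 2) + 1 by lia.
apply: crossing_product_of_mem; rewrite (acts_as_swap_pair a1 ab bm act_s).
by apply: swap2_mixed_in; lia.
Qed.
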